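(* For every positive integer $k$, $R_{3,\dots,3}(W_3^{\otimes k})\leq(2+k)2^{k-1}$, where $W_3^{\otimes k}$ is viewed in $S^3\mathbb{C}^2\otimes\cdots\otimes S^3\mathbb{C}^2$ ($k$ factors).
   Context: Identify $S^3\mathbb{C}^2$ with binary cubic forms in a basis $\{x,y\}$; $W_3=x^2y$ (equivalently $y\otimes x\otimes x+x\otimes y\otimes x+x\otimes x\otimes y$). The partially symmetric rank $R_{d_1,\dots,d_k}(T)$ is the minimal $r$ such that $T=\sum_{i=1}^r v_{i,1}^{\otimes d_1}\otimes\cdots\otimes v_{i,k}^{\otimes d_k}$ with $v_{i,j}\in\mathbb{C}^2$. *)

(* C is modelled as R[i] = complex R for an arbitrary
   R : realType (for R the real numbers this is exactly the field C). *)
From HB Require Import structures.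
From mathcomp Require Import all_boot all_order all_algebra.
From mathcomp Require Import complex.
From mathcomp Require Import reals.
Set Implicit Arguments. Unset Strict Implicit. Unset Printing Implicit Defensive.
Import Order.TTheory GRing.Theory Num.Theory.
Local Open Scope ring_scope.

(* Index set of a tensor in (C^2)^{(x)d_1} (x) ... (x) (C^2)^{(x)d_k}:
   for each factor j < k and each position l < d_j, a basis index in {0,1}
   (0 <-> x, 1 <-> y). *)
Definition tindex (k : nat) (d : 'I_k -> nat) : Type :=
  forall j : 'I_k, 'I_(d j) -> 'I_2.

Definition tensor (F : Type) (k : nat) (d : 'I_k -> nat) : Type :=
  tindex d -> F.

Definition ps_decomposition (F : comNzRingType) (k : nat) (d : 'I_k -> nat)
    (T : tensor F d) (r : nat) (v : 'I_r -> 'I_k -> 'I_2 -> F) : Prop :=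
  forall idx : tindex d,
    T idx = \sum_(i < r) \prod_(j < k) \prod_(l < d j) v i j (idx j l).

Definition ps_decomposable (F : comNzRingType) (k : nat) (d : 'I_k -> nat)
    (T : tensor F d) (r : nat) : Prop :=
  exists v : 'I_r -> 'I_k -> 'I_2 -> F, ps_decomposition T v.

Definition ps_rank_le (F : comNzRingType) (k : nat) (d : 'I_k -> nat)
    (T : tensor F d) (n : nat) : Prop :=
  exists2 r : nat, (r <= n)%N & ps_decomposable T r.

(* W_3 = x^2 y = y(x)x(x)x + x(x)y(x)x + x(x)x(x)y in S^3 C^2 inside (C^2)^{(x)3}:
   coordinate 1 exactly when exactly one index equals y (= 1). *)
Definition W3 (F : comNzRingType) (idx : 'I_3 -> 'I_2) : F :=
  if #|[pred l : 'I_3 | val (idx l) == 1%N]| == 1%N then 1 else 0.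

Definition W3_pow (F : comNzRingType) (k : nat) : tensor F (fun _ : 'I_k => 3%N) :=
  fun idx => \prod_(j < k) W3 F (idx j).
Arguments W3_pow F k idx : clear implicits.

(* Write w_j and y_j for the coordinates of W_3 and of y^(x)3 in the j-th
   factor.  For pairwise distinct nonzero nodes x_i, Lagrange interpolation of
   the constant 1 at 0 gives
     prod_j w_j = prod_j (w_j + y_j)
                  - sum_j y_j prod_(i <> j) (w_i + x_i / (x_i - x_j) y_i).
   Since (mu, nu)^(x)3 + (-mu, nu)^(x)3 = 2 mu^2 nu W_3 + 2 nu^3 y^(x)3, every
   factor W_3 + c y^(x)3 with c <> 0 is a sum of two cubes over C, and
   expanding the products gives 2^k + k 2^(k-1) terms. *)

From mathcomp Require Import all_boot all_algebra.
From mathcomp Require Import complex reals ring.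
Import GRing.Theory Num.Theory.
Set Implicit Arguments. Unset Strict Implicit. Unset Printing Implicit Defensive.
Local Open Scope ring_scope.

Section Decompositions.
Variables (F : comNzRingType) (k : nat) (d : 'I_k -> nat).
Implicit Types (T : tensor F d) (r : nat).

Lemma eq_ps_decomposable T1 T2 r :
  (forall idx, T1 idx = T2 idx) -> ps_decomposable T1 r -> ps_decomposable T2 r.
Proof. by move=> eqT [v hv]; exists v => idx; rewrite -eqT. Qed.

Lemma ps_decomposable_sum_in (I : finType) (A : {pred I})
    (v : I -> 'I_k -> 'I_2 -> F) :
  ps_decomposable (fun idx : tindex d =>
    \sum_(p in A) \prod_(j < k) \prod_(l < d j) v p j (idx j l)) #|A|.
Proof. by exists (fun i => v (enum_val i)) => idx; rewrite big_enum_val. Qed.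

Lemma ps_decomposable_add T1 T2 r1 r2 :
  ps_decomposable T1 r1 -> ps_decomposable T2 r2 ->
  ps_decomposable (fun idx => T1 idx + T2 idx) (r1 + r2)%N.
Proof.
move=> [v1 h1] [v2 h2].
exists (fun i => match split i with inl i1 => v1 i1 | inr i2 => v2 i2 end) => idx.
by rewrite h1 h2 big_split_ord; congr (_ + _); apply: eq_bigr => i _;
  rewrite ?(unsplitK (inl i)) ?(unsplitK (inr i)).
Qed.

Lemma ps_decomposable_bigsum m (T : 'I_m -> tensor F d) (r : 'I_m -> nat) :
  (forall j, ps_decomposable (T j) (r j)) ->
  ps_decomposable (fun idx => \sum_(j < m) T j idx) (\sum_(j < m) r j)%N.
Proof.
elim: m T r => [|m IHm] T r hT.
  by exists (fun _ _ _ => 0) => idx; rewrite !big_ord0.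
rewrite big_ord_recl; apply: eq_ps_decomposable
  (ps_decomposable_add (hT ord0) (IHm _ _ (fun j => hT (lift ord0 j)))) => idx.
by rewrite big_ord_recl.
Qed.

Lemma ps_decomposable_prod (J : finType) (B : 'I_k -> {pred J})
    (v : 'I_k -> J -> 'I_2 -> F) :
  ps_decomposable (fun idx : tindex d =>
    \prod_(j < k) \sum_(b in B j) \prod_(l < d j) v j b (idx j l))
    (\prod_(j < k) #|B j|).
Proof.
have -> : (\prod_(j < k) #|B j|)%N = #|(family B : simpl_pred {ffun 'I_k -> J})|.
  by rewrite card_family foldrE big_map big_enum.
have := ps_decomposable_sum_in (family B) (fun f j => v j (f j)).
apply: eq_ps_decomposable => idx.
by rewrite bigA_distr_big_dep.
Qed.
End Decompositions.

Section PartialFractions.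
Variables (F : fieldType) (I : eqType) (x w y : I -> F).

Let e i t := x i / (x i - t).

Lemma partial_fraction_mul a b t : x a != t -> x b != t -> x a != x b ->
  e a t * e b t = e a t * e b (x a) + e b t * e a (x b).
Proof.
rewrite /e; move: (x a) (x b) => X Y Xt Yt XY.
by field; rewrite !subr_eq0 Xt Yt XY eq_sym XY.
Qed.

(* Generalising 0 to t makes the induction go through: the inductive step
   uses the hypothesis at the new node t := x a. *)
Lemma prod_partial_fraction s t :
  uniq s -> {in s &, injective x} -> {in s, forall i, x i != t} ->
  \prod_(i <- s) (w i + y i * e i t) = \prod_(i <- s) w i
    + \sum_(j <- s) y j * e j t * \prod_(i <- s | i != j) (w i + y i * e i (x j)).
Proof.
elim: s t => [|a s IHs] t; first by rewrite !big_nil addr0.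
move=> /andP[a_s uniq_s] inj_x xt.
have sub_s : {subset s <= a :: s} by move=> i i_s; rewrite inE i_s orbT.
have inj_s : {in s &, injective x} := sub_in2 sub_s inj_x.
have xt_s : {in s, forall i, x i != t} by move=> i /sub_s; apply: xt.
have xa_s : {in s, forall i, x i != x a}.
  move=> i i_s; apply: contraNneq a_s => /inj_x eq_ia.
  by rewrite -eq_ia ?i_s ?mem_head ?sub_s.
have prod_neq_a : \prod_(i <- s | i != a) (w i + y i * e i (x a))
    = \prod_(i <- s) (w i + y i * e i (x a)).
  rewrite big_seq_cond [RHS]big_seq; apply: eq_bigl => i.
  by apply/andb_idr => i_s; apply: contraNneq a_s => <-.
have sum_cons : \sum_(j <- s) y j * e j t *
            \prod_(i <- a :: s | i != j) (w i + y i * e i (x j))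
    = w a * \sum_(j <- s) y j * e j t * \prod_(i <- s | i != j) (w i + y i * e i (x j))
      + y a * e a t *
        (\sum_(j <- s) y j * e j t * \prod_(i <- s | i != j) (w i + y i * e i (x j))
         - \sum_(j <- s) y j * e j (x a) *
             \prod_(i <- s | i != j) (w i + y i * e i (x j))).
  rewrite -sumrB !mulr_sumr -big_split; apply: eq_big_seq => j j_s /=.
  rewrite big_cons ifT; last by apply: contraNneq a_s => ->.
  have key : e j t * e a (x j) = e a t * e j t - e a t * e j (x a).
    have xaj : x a != x j by rewrite eq_sym xa_s.
    have xat : x a != t by apply: xt; rewrite mem_head.
    by rewrite (partial_fraction_mul xat (xt_s j j_s) xaj) addrC addKr.
  set P := \prod_(i <- s | i != j) _.
  transitivity (y j * e j t * w a * P + y a * y j * P * (e j t * e a (x j))); first ring.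
  by rewrite key; ring.
rewrite !big_cons eqxx /= prod_neq_a sum_cons (IHs t) // (IHs (x a)) //; ring.
Qed.

Lemma prod_lagrange s :
  uniq s -> {in s &, injective x} -> {in s, forall i, x i != 0} ->
  \prod_(i <- s) w i = \prod_(i <- s) (w i + y i)
    - \sum_(j <- s) y j * \prod_(i <- s | i != j) (w i + y i * (x i / (x i - x j))).
Proof.
move=> uniq_s inj_x x_neq0.
have e0 : {in s, forall i, e i 0 = 1} by move=> i i_s; rewrite /e subr0 divff ?x_neq0.
have -> : \prod_(i <- s) (w i + y i) = \prod_(i <- s) (w i + y i * e i 0).
  by apply: eq_big_seq => i i_s; rewrite e0 ?mulr1.
rewrite prod_partial_fraction //.
under [X in _ + X - _]eq_big_seq => j j_s do rewrite e0 // mulr1.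
by rewrite addrK.
Qed.
End PartialFractions.

Definition vec2 (F : Type) (p q : F) : 'I_2 -> F :=
  fun b => if val b == 1%N then q else p.

Definition tpow (F : comNzRingType) n (v : 'I_2 -> F) (a : 'I_n -> 'I_2) : F :=
  \prod_(l < n) v (a l).

Section TensorPowers.
Variables (F : comNzRingType) (n : nat).

Lemma tpowN (v : 'I_2 -> F) (a : 'I_n -> 'I_2) :
  tpow (fun b => - v b) a = (-1) ^+ n * tpow v a.
Proof. by rewrite /tpow prodrN card_ord. Qed.

Lemma tpow_vec2 (p q : F) (a : 'I_n -> 'I_2) :
  let m := #|[pred l | val (a l) == 1%N]| in
  tpow (vec2 p q) a = p ^+ (n - m) * q ^+ m.
Proof.
move=> m; set ones := [pred l | val (a l) == 1%N].
have -> : (n - m)%N = #|[predC ones]|.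
  by rewrite -[X in (X - _)%N](card_ord n) -(cardC ones) addKn.
rewrite /tpow /vec2 (bigID ones) /= mulrC -!prodr_const.
by congr (_ * _); apply: eq_big => // l; [move/negbTE|] => ->.
Qed.
End TensorPowers.

Lemma cube_add_cube_opp (F : comNzRingType) (mu nu : F) (a : 'I_3 -> 'I_2) :
  tpow (vec2 mu nu) a + tpow (vec2 (- mu) nu) a
  = 2 * mu ^+ 2 * nu * W3 F a + 2 * nu ^+ 3 * tpow (vec2 0 1) a.
Proof.
rewrite /W3 !tpow_vec2; set m := #|_|.
have : (m <= 3)%N by rewrite -[3%N](card_ord 3) max_card.
by case: m => [|[|[|[|m]]]] //= _; ring.
Qed.

Section TwoCubes.
Variable F : numClosedFieldType.

Definition cube_split (c : F) (b : bool) : 'I_2 -> F :=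
  let nu := 3.-root (c / 2) in vec2 ((-1) ^+ b * sqrtC (2 * nu)^-1) nu.

Lemma sum_cube_split (c : F) (a : 'I_3 -> 'I_2) : c != 0 ->
  \sum_(b : bool) tpow (cube_split c b) a = W3 F a + c * tpow (vec2 0 1) a.
Proof.
move=> c_neq0; rewrite big_bool /cube_split /= expr1 expr0 mulN1r mul1r addrC.
rewrite cube_add_cube_opp sqrtCK; set nu := 3.-root _.
have nu3 : nu ^+ 3 = c / 2 by apply: rootCK.
have : nu ^+ 3 != 0 by rewrite nu3 mulf_neq0 // invr_eq0 pnatr_eq0.
rewrite expf_eq0 /= => nu_neq0.
have two_neq0 : 2 != 0 :> F by rewrite pnatr_eq0.
have -> : 2 * (2 * nu)^-1 * nu = 1 by field.
by rewrite mul1r nu3 [2 * _]mulrC divfK.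
Qed.

Lemma ps_decomposable_W3_add_cube_prod k (P : pred 'I_k) (c : 'I_k -> F)
    (u : 'I_k -> 'I_2 -> F) :
  {in P, forall i, c i != 0} ->
  ps_decomposable (fun idx : tindex (fun _ : 'I_k => 3%N) => \prod_(i < k)
    if P i then W3 F (idx i) + c i * tpow (vec2 0 1) (idx i) else tpow (u i) (idx i))
    (2 ^ #|P|)%N.
Proof.
move=> c_neq0.
pose B i : {pred bool} := if P i then predT else pred1 false.
pose V i b := if P i then cube_split (c i) b else u i.
have := @ps_decomposable_prod F k (fun _ => 3%N) _ B V.
have -> : (\prod_i #|B i|)%N = (2 ^ #|P|)%N.
  rewrite -prod_nat_const [in RHS]big_mkcond /=; apply: eq_bigr => i _.
  by rewrite /B unfold_in; case: (P i); rewrite ?card_bool ?card1.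
apply: eq_ps_decomposable => idx; apply: eq_bigr => i _; rewrite /B /V.
case: ifP => Pi; first exact: sum_cube_split (c_neq0 i Pi).
by rewrite (big_pred1 false).
Qed.
End TwoCubes.

Lemma W3_pow_ps_decomposable (F : numClosedFieldType) n :
  ps_decomposable (W3_pow F n.+1) (2 ^ n.+1 + n.+1 * 2 ^ n)%N.
Proof.
pose x (i : 'I_n.+1) : F := i.+1%:R.
have x_neq0 i : x i != 0 by rewrite pnatr_eq0.
have x_inj : injective x by move=> i j /eqP; rewrite eqr_nat eqSS => /eqP/val_inj.
have full := ps_decomposable_W3_add_cube_prod (k := n.+1) (P := predT)
  (c := fun _ => 1) (fun _ => vec2 0 1) (fun i _ => oner_neq0 F).
rewrite card_ord in full.
have xj_neq0 j : {in predC1 j, forall i, x i / (x i - x j) != 0}.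
  move=> i; rewrite inE => ij.
  by rewrite mulf_neq0 ?invr_eq0 ?subr_eq0 ?(inj_eq x_inj).
have term j := ps_decomposable_W3_add_cube_prod (fun _ b => - vec2 0 1 b) (xj_neq0 j).
have := ps_decomposable_add full (ps_decomposable_bigsum term).
have -> : (\sum_(j < n.+1) 2 ^ #|predC1 j| = n.+1 * 2 ^ n)%N.
  under eq_bigr do rewrite cardC1 card_ord.
  by rewrite sum_nat_const card_ord.
apply: eq_ps_decomposable => idx.
rewrite /W3_pow (prod_lagrange (x := x) (fun i => W3 F (idx i))
  (fun i => tpow (vec2 0 1) (idx i)) (index_enum_uniq _) (in2W x_inj) (in1W x_neq0)).
rewrite -sumrN; congr (_ + _); first by apply: eq_bigr => i _; rewrite mul1r.
apply: eq_bigr => j _; rewrite (bigD1 j) //= eqxx tpowN -signr_odd expr1 mulN1r mulNr.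
by congr (- (_ * _)); apply: eq_bigr => i /= ->; rewrite mulrC.
Qed.

Theorem theorem3p3 (R : realType) (k : nat) (hk : (0 < k)%N) :
  ps_rank_le (W3_pow R[i] k) ((2 + k) * 2 ^ k.-1)%N.
Proof.
case: k hk => // n _.
exists (2 ^ n.+1 + n.+1 * 2 ^ n)%N; first by rewrite mulnDl expnS.
exact: W3_pow_ps_decomposable.
Qed.
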